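(* Let $C\subseteq\mathbb{R}^n$ be a nonempty closed convex set and $D\subseteq\mathbb{R}^n$ a nonempty compact set. Given $x^0\in\mathbb{R}^n$ and $\gamma\in(0,\frac1{12})$, consider the iteration \[ y^{t+1}=\frac{\gamma P_C\!\left(\frac{x^t}{1+5\gamma}\right)+x^t}{6\gamma+1},\qquad z^{t+1}\in P_D\!\left(\frac{2y^{t+1}-x^t}{1-5\gamma}\right),\qquad x^{t+1}=x^t+2(z^{t+1}-y^{t+1}). \] Then $\{(y^t,z^t,x^t)\}$ is bounded, and every cluster point $(\bar y,\bar z,\bar x)$ satisfies $\bar y=\bar z$ and $0\in\nabla F(\bar z)+\partial\delta_D(\bar z)$, where $F=\frac12 d_C^2$; i.e., $\bar z$ is a stationary point of $\min_u \frac12 d_C^2(u)+\delta_D(u)$.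
   Context: $d_C$ is the Euclidean distance to $C$, $P_C$ the projection onto $C$, $P_D(x)$ the (possibly multivalued) set of points of $D$ nearest to $x$ (any element may be chosen), and $\delta_D$ the indicator function of $D$ ($0$ on $D$, $+\infty$ outside). $\partial\delta_D$ is the limiting subdifferential: $v\in\partial h(x)$ iff there exist $x^t\to x$ with $h(x^t)\to h(x)$ and $v^t\to v$ such that $\liminf_{z\to x^t, z\ne x^t}\frac{h(z)-h(x^t)-\langle v^t,z-x^t\rangle}{\|z-x^t\|}\ge0$ for each $t$. *)

From mathcomp Require Import ssreflect ssrfun ssrbool eqtype ssrnat seq fintype bigop.
From Stdlib Require Import Reals ClassicalEpsilon.
Open Scope R_scope.

Definition vec (n : nat) := 'I_n -> R.

Section Vec.
Context {n : nat}.
Implicit Types x y u v : vec n.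

Definition vadd x y : vec n := fun i => x i + y i.
Definition vsub x y : vec n := fun i => x i - y i.
Definition vscale (a : R) x : vec n := fun i => a * x i.
Definition vdot x y : R := \big[Rplus/R0]_(i < n) (x i * y i).
Definition vnorm x : R := sqrt (vdot x x).
Definition vdist x y : R := vnorm (vsub x y).

Definition vconv (u : nat -> vec n) (l : vec n) : Prop :=
  Un_cv (fun k => vdist (u k) l) 0.

Definition vbounded (u : nat -> vec n) : Prop :=
  exists M, forall k, vnorm (u k) <= M.

Definition is_closed (C : vec n -> Prop) : Prop :=
  forall (u : nat -> vec n) l, (forall k, C (u k)) -> vconv u l -> C l.

Definition is_convex (C : vec n -> Prop) : Prop :=
  forall a b lam, C a -> C b -> 0 <= lam <= 1 ->
    C (vadd (vscale lam a) (vscale (1 - lam) b)).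

Definition is_compact (D : vec n -> Prop) : Prop :=
  forall u : nat -> vec n, (forall k, D (u k)) ->
    exists (phi : nat -> nat) l,
      (forall k, (phi k < phi (S k))%nat) /\ D l /\ vconv (fun k => u (phi k)) l.

Definition nonempty (C : vec n -> Prop) : Prop := exists c, C c.

Definition nearest (S : vec n -> Prop) x p : Prop :=
  S p /\ forall c, S c -> vdist x p <= vdist x c.

(* the projection P_C (a chosen nearest point; unique for C nonempty closed convex) *)
Definition proj (C : vec n -> Prop) x : vec n :=
  epsilon (inhabits (fun _ => R0)) (nearest C x).

Definition is_inf_dist (C : vec n -> Prop) x (r : R) : Prop :=
  (forall c, C c -> r <= vdist x c) /\
  (forall s, (forall c, C c -> s <= vdist x c) -> s <= r).

Definition dist_set (C : vec n -> Prop) x : R :=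
  epsilon (inhabits R0) (is_inf_dist C x).

Definition has_gradient (f : vec n -> R) x (g : vec n) : Prop :=
  forall eps, 0 < eps -> exists del, 0 < del /\
    forall u, 0 < vdist u x < del ->
      Rabs (f u - f x - vdot g (vsub u x)) <= eps * vdist u x.

(* Frechet (regular) subgradient condition for the indicator delta_D at a point
   xt of D:  liminf_{z -> xt, z <> xt} (delta_D z - delta_D xt - <v, z - xt>)/|z - xt| >= 0.
   Points z outside D contribute +infinity, so only z in D matter. *)
Definition regular_subgrad_ind (D : vec n -> Prop) xt v : Prop :=
  forall eps, 0 < eps -> exists del, 0 < del /\
    forall z, D z -> 0 < vdist z xt < del ->
      - vdot v (vsub z xt) / vdist z xt >= - eps.

(* limiting subdifferential of delta_D at x: v \in partial delta_D(x)
   iff x in D and there are x^t -> x with delta_D(x^t) -> delta_D(x) = 0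
   (i.e. x^t in D) and v^t -> v with v^t a regular subgradient at x^t. *)
Definition lim_subdiff_ind (D : vec n -> Prop) x v : Prop :=
  D x /\ exists (xs vs : nat -> vec n),
    (forall t, D (xs t)) /\ vconv xs x /\ vconv vs v /\
    (forall t, regular_subgrad_ind D (xs t) (vs t)).

End Vec.

(* The iteration is the Peaceman-Rachford splitting of [F + delta_D] as [f + g] with
   [f = F + 5/2 |.|^2] (where [grad F u = u - P_C u]) and [g = delta_D - 5/2 |.|^2]:
   [y^{t+1}] solves [x^t = y + gamma grad f(y)] and [z^{t+1}] is a proximal point of [gamma g]
   at [2 y^{t+1} - x^t].
   Since D is compact and P_C nonexpansive, [x^{t+1}] is an affine contraction of [x^t] up to
   bounded terms, which bounds all iterates. The Douglas-Rachford merit function [merit]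
   decreases by [(5/2 - 26 gamma) |y^{t+2} - y^{t+1}|^2] per step and is bounded below along
   bounded iterates, so these increments, and with them [z^t - y^t], tend to 0. Finally the
   optimality of [z^{t+1}] yields a proximal normal to D at [z^{t+1}], equal to
   [(1 - 5 gamma)/gamma (y - z) - grad F(y)] at [y = y^{t+1}], [z = z^{t+1}]; along a convergent
   subsequence it tends to [- grad F(z)]. *)

From mathcomp Require Import ssreflect ssrfun ssrbool eqtype ssrnat seq fintype bigop.
From Stdlib Require Import Reals ClassicalEpsilon.
From Stdlib Require Import Classical Lra Lia FunctionalExtensionality.
Open Scope R_scope.

Section Sums.
Context {n : nat}.
Implicit Types f g : 'I_n -> R.

Lemma sum_plus f g :
  \big[Rplus/R0]_(i < n) f i + \big[Rplus/R0]_(i < n) g i = \big[Rplus/R0]_(i < n) (f i + g i).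
Proof. apply: (big_rec3 (fun a b c => a + b = c)) => [|i a b c _ <-]; change R0 with 0; lra. Qed.

Lemma sum_minus f g :
  \big[Rplus/R0]_(i < n) f i - \big[Rplus/R0]_(i < n) g i = \big[Rplus/R0]_(i < n) (f i - g i).
Proof. apply: (big_rec3 (fun a b c => a - b = c)) => [|i a b c _ <-]; change R0 with 0; lra. Qed.

Lemma sum_scal_l c f : c * \big[Rplus/R0]_(i < n) f i = \big[Rplus/R0]_(i < n) (c * f i).
Proof. apply: (big_rec2 (fun a b => c * a = b)) => [|i a b _ <-]; change R0 with 0; ring. Qed.

Lemma sum_scal_r c f : \big[Rplus/R0]_(i < n) f i * c = \big[Rplus/R0]_(i < n) (f i * c).
Proof. apply: (big_rec2 (fun a b => a * c = b)) => [|i a b _ <-]; change R0 with 0; ring. Qed.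

Lemma sum_opp f : Ropp (\big[Rplus/R0]_(i < n) f i) = \big[Rplus/R0]_(i < n) (- f i).
Proof. apply: (big_rec2 (fun a b => - a = b)) => [|i a b _ <-]; change R0 with 0; ring. Qed.

Lemma sum_ge0 f : (forall i, 0 <= f i) -> 0 <= \big[Rplus/R0]_(i < n) f i.
Proof.
move=> f0; apply: (big_rec (fun a => 0 <= a)) => [|i a _ a0]; first by change R0 with 0; lra.
by have := f0 i; lra.
Qed.

Lemma sum_term_le f j : (forall i, 0 <= f i) -> f j <= \big[Rplus/R0]_(i < n) f i.
Proof.
move=> f0; have : j \in index_enum 'I_n by rewrite mem_index_enum.
elim: (index_enum _) => [|k r IH] //; rewrite big_cons in_cons => /orP [/eqP ->|/IH fj].
- rewrite -{1}(Rplus_0_r (f k)); apply: Rplus_le_compat_l.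
  apply: (big_rec (fun a => 0 <= a)) => [|i a _ a0]; first by change R0 with 0; lra.
  by have := f0 i; lra.
- by have := Rplus_le_compat _ _ _ _ (f0 k) fj; rewrite Rplus_0_l.
Qed.

Lemma sum_cv0 (a : 'I_n -> nat -> R) :
  (forall i, Un_cv (a i) 0) -> Un_cv (fun k => \big[Rplus/R0]_(i < n) a i k) 0.
Proof.
move=> a0; elim: (index_enum _) => [|j r IH].
- move=> e e0; exists 0%nat => k _; rewrite big_nil /R_dist; change R0 with 0.
  by rewrite Rminus_0_r Rabs_R0.
- have := CV_plus _ _ _ _ (a0 j) IH; rewrite Rplus_0_r => cv e e0.
  by case: (cv e e0) => N hN; exists N => k kN; rewrite big_cons; apply: hN.
Qed.

End Sums.

Ltac sum_merge := repeat progress rewrite ?sum_scal_l ?sum_scal_r ?sum_opp ?sum_plus ?sum_minus.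

Definition vnorm2 {n} (a : vec n) : R := vdot a a.

Ltac vec_ring :=
  unfold vnorm2, vdot, vadd, vsub, vscale; sum_merge; apply: eq_bigr => i _; first [ring | field].

Ltac vec_ext := apply: functional_extensionality => i; rewrite /vadd /vsub /vscale.

Section Vectors.
Context {n : nat}.
Implicit Types a b c : vec n.

Lemma vnorm2_ge0 a : 0 <= vnorm2 a.
Proof. apply: sum_ge0 => i; exact: Rle_0_sqr. Qed.

Lemma vnorm2_eq0 a : vnorm2 a = 0 -> a = (fun _ => 0).
Proof.
move=> a0; apply: functional_extensionality => i.
have := sum_term_le (fun i => a i * a i) i (fun i => Rle_0_sqr (a i)).
rewrite -/(vdot a a) -/(vnorm2 a) a0 => ai.
have : a i * a i = 0 by have := Rle_0_sqr (a i); rewrite /Rsqr; lra.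
by case/Rmult_integral.
Qed.

Lemma vnorm_ge0 a : 0 <= vnorm a.
Proof. exact: sqrt_pos. Qed.

Lemma vnorm_sqr a : vnorm a * vnorm a = vnorm2 a.
Proof. by rewrite /vnorm sqrt_sqrt //; apply: vnorm2_ge0. Qed.

Lemma vnorm_eq0 a : vnorm a = 0 -> a = (fun _ => 0).
Proof. by move=> a0; apply: vnorm2_eq0; rewrite -vnorm_sqr a0 Rmult_0_l. Qed.

Lemma vdot_sym a b : vdot a b = vdot b a.
Proof. vec_ring. Qed.

Lemma vdot_0l b : vdot (fun _ => 0) b = 0.
Proof. by rewrite /vdot; apply: (big_rec (fun r => r = 0)) => // i r _ ->; ring. Qed.

Lemma vdot_cauchy_schwarz a b : vdot a b <= vnorm a * vnorm b.
Proof.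
have na := vnorm_ge0 a; have nb := vnorm_ge0 b.
have [a0|a0] := Req_dec (vnorm a) 0; first by rewrite a0 (vnorm_eq0 _ a0) vdot_0l; lra.
have [b0|b0] := Req_dec (vnorm b) 0.
  by rewrite b0 (vnorm_eq0 _ b0) vdot_sym vdot_0l; lra.
have := vnorm2_ge0 (vsub (vscale (vnorm b) a) (vscale (vnorm a) b)).
have -> : vnorm2 (vsub (vscale (vnorm b) a) (vscale (vnorm a) b)) =
   vnorm b * vnorm b * vnorm2 a - 2 * (vnorm a * vnorm b) * vdot a b
   + vnorm a * vnorm a * vnorm2 b by vec_ring.
rewrite -!vnorm_sqr => h.
have ab : 0 < vnorm a * vnorm b by apply: Rmult_lt_0_compat; lra.
have : 0 <= (vnorm a * vnorm b) * (2 * (vnorm a * vnorm b - vdot a b)) by nra.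
have := Rmult_le_reg_l _ 0 _ ab; nra.
Qed.

Lemma vnorm2_add a b : vnorm2 (vadd a b) = vnorm2 a + 2 * vdot a b + vnorm2 b.
Proof. vec_ring. Qed.

Lemma vdot_ge a b : - (vnorm2 a + vnorm2 b) / 2 <= vdot a b.
Proof. have := vnorm2_ge0 (vadd a b); rewrite vnorm2_add; lra. Qed.

Lemma vnorm_triangle a b : vnorm (vadd a b) <= vnorm a + vnorm b.
Proof.
have := vnorm_ge0 (vadd a b); have := vnorm_ge0 a; have := vnorm_ge0 b.
have := vdot_cauchy_schwarz a b; have := vnorm2_add a b; rewrite -!vnorm_sqr => e *.
apply: Rsqr_incr_0_var; rewrite /Rsqr; nra.
Qed.

Lemma vnorm2_scale s a : vnorm2 (vscale s a) = s * s * vnorm2 a.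
Proof. vec_ring. Qed.

Lemma vnorm2_add_le a b : vnorm2 (vadd a b) <= 2 * vnorm2 a + 2 * vnorm2 b.
Proof.
have := vnorm2_ge0 (vsub a b).
have -> : vnorm2 (vsub a b) = 2 * vnorm2 a + 2 * vnorm2 b - vnorm2 (vadd a b) by vec_ring.
lra.
Qed.

Lemma vnorm_scale s a : vnorm (vscale s a) = Rabs s * vnorm a.
Proof.
rewrite /vnorm -/(vnorm2 (vscale s a)) vnorm2_scale.
rewrite sqrt_mult; [|exact: Rle_0_sqr|exact: vnorm2_ge0].
by rewrite -/(Rsqr s) sqrt_Rsqr_abs.
Qed.

Lemma vnorm_sub_sym a b : vnorm (vsub a b) = vnorm (vsub b a).
Proof. by rewrite /vnorm; congr sqrt; vec_ring. Qed.

Lemma vnorm_sub_le a b : vnorm (vsub a b) <= vnorm a + vnorm b.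
Proof.
have -> : vsub a b = vadd a (vscale (-1) b) by vec_ext; ring.
by have := vnorm_triangle a (vscale (-1) b); rewrite vnorm_scale Rabs_Ropp Rabs_R1 Rmult_1_l.
Qed.

Lemma vnorm_le_sub a b : vnorm a <= vnorm b + vnorm (vsub a b).
Proof.
have {1}-> : a = vadd b (vsub a b) by vec_ext; ring.
exact: vnorm_triangle.
Qed.

Lemma vdist_triangle a b c : vdist a c <= vdist a b + vdist b c.
Proof.
rewrite /vdist; have -> : vsub a c = vadd (vsub a b) (vsub b c) by vec_ext; ring.
exact: vnorm_triangle.
Qed.

Lemma vdist_sym a b : vdist a b = vdist b a.
Proof. exact: vnorm_sub_sym. Qed.

Lemma vdist_self a : vdist a a = 0.
Proof.
rewrite /vdist /vnorm (_ : vsub a a = fun _ => 0) ?vdot_0l ?sqrt_0 //.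
by vec_ext; ring.
Qed.

Lemma vdist_le0 a b : vdist a b <= 0 -> a = b.
Proof.
move=> ab; have /vnorm_eq0 e : vnorm (vsub a b) = 0.
  by have := vnorm_ge0 (vsub a b); rewrite /vdist in ab; lra.
apply: functional_extensionality => i.
by have := f_equal (fun f => f i) e; rewrite /vsub /=; lra.
Qed.

End Vectors.

Lemma nearest_vnorm2 {n} (S : vec n -> Prop) (x p c : vec n) :
  nearest S x p -> S c -> vnorm2 (vsub x p) <= vnorm2 (vsub x c).
Proof.
by move=> [_ near] Sc; apply: sqrt_le_0; [exact: vnorm2_ge0 | exact: vnorm2_ge0 | exact: near].
Qed.

Lemma cv_const (c : R) : Un_cv (fun _ => c) c.
Proof. by move=> e e0; exists 0%nat => k _; rewrite /R_dist Rminus_diag_eq // Rabs_R0. Qed.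

Lemma squeeze0 (u v : nat -> R) : (forall k, 0 <= u k <= v k) -> Un_cv v 0 -> Un_cv u 0.
Proof.
move=> uv v0 e e0; case: (v0 e e0) => N hN; exists N => k kN.
by have := hN k kN; have := uv k; rewrite /R_dist !Rminus_0_r; split_Rabs; lra.
Qed.

Lemma sqrt_cv0 (u : nat -> R) : (forall k, 0 <= u k) -> Un_cv u 0 -> Un_cv (fun k => sqrt (u k)) 0.
Proof.
move=> u0 cv e e0; case: (cv (e * e)) => [|N hN]; first nra.
exists N => k kN; have := hN k kN; rewrite /R_dist !Rminus_0_r.
rewrite Rabs_right ?Rabs_right; try (apply: Rle_ge; solve [exact: u0 | exact: sqrt_pos]).
move=> uk; rewrite -(sqrt_square e); last lra.
by apply: sqrt_lt_1_alt; split; [exact: u0 | lra].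
Qed.

Lemma le_lim a b (s : nat -> R) : (forall k, a <= b + s k) -> Un_cv s 0 -> a <= b.
Proof.
move=> abs s0; apply: Rnot_lt_le => ab; case: (s0 (a - b)) => [|N hN]; first lra.
by have := hN N (le_n N); have := abs N; rewrite /R_dist Rminus_0_r; split_Rabs; lra.
Qed.

Lemma incr_ge_id (phi : nat -> nat) :
  (forall k, (phi k < phi (S k))%nat) -> forall k, (k <= phi k)%coq_nat.
Proof. by move=> incr; elim=> [|k IH]; [lia | have /ltP := incr k; lia]. Qed.

Lemma cv_subseq (u : nat -> R) l (T : nat -> nat) :
  Un_cv u l -> (forall k, (k <= T k)%coq_nat) -> Un_cv (fun k => u (T k)) l.
Proof.
move=> cv T_ge e e0; case: (cv e e0) => N hN; exists N => k kN.
by apply: hN; have := T_ge k; lia.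
Qed.

Definition inv_succ (k : nat) : R := / (INR k + 1).

Lemma inv_succ_gt0 k : 0 < inv_succ k.
Proof. by apply: Rinv_0_lt_compat; have := pos_INR k; lra. Qed.

Lemma inv_succ_cv0 : Un_cv inv_succ 0.
Proof.
move=> e e0; case: (INR_archimed e 1 e0) => N hN; exists N => k kN.
have Nk : INR N <= INR k by apply: le_INR.
have k1 : 0 < INR k + 1 by have := pos_INR k; lra.
have : inv_succ k < e.
  by apply: (Rmult_lt_reg_l (INR k + 1)) => //; rewrite /inv_succ Rinv_r; nra.
by have := inv_succ_gt0 k; rewrite /R_dist Rminus_0_r; split_Rabs; lra.
Qed.

Lemma summable_cv0 (a : nat -> R) M :
  (forall k, 0 <= a k) -> (forall t, sum_f_R0 a t <= M) -> Un_cv a 0.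
Proof.
move=> a0 aM.
have grow : Un_growing (sum_f_R0 a) by move=> t; rewrite tech5; have := a0 (S t); lra.
have ub : has_ub (sum_f_R0 a) by exists M => r [i ->]; exact: aM.
have cauchy := CV_Cauchy _ (growing_cv _ grow ub).
move=> e e0; case: (cauchy e e0) => N hN; exists (S N) => -[|k] kN; first lia.
have := hN (S k) k ltac:(lia) ltac:(lia); rewrite tech5 /R_dist /Rdist Rminus_0_r.
by have := a0 (S k); split_Rabs; lra.
Qed.

Lemma descent_cv0 (Ph a : nat -> R) c B :
  0 < c -> (forall t, 0 <= a t) -> (forall t, - B <= Ph t) ->
  (forall t, Ph (S t) <= Ph t - c * a t) -> Un_cv a 0.
Proof.
move=> c0 a0 PhB dec; apply: (summable_cv0 _ ((Ph 0%nat + B) / c)) => // t.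
have tel : c * sum_f_R0 a t <= Ph 0%nat - Ph (S t).
  elim: t => [|t IH] /=; first by have := dec 0%nat; lra.
  by have := dec (S t); lra.
apply: (Rmult_le_reg_l c) => //.
have -> : c * ((Ph 0%nat + B) / c) = Ph 0%nat + B by field; lra.
by have := PhB (S t); lra.
Qed.

Lemma affine_rec_bound (u : nat -> R) rho K :
  0 <= rho < 1 -> 0 <= K -> 0 <= u 0%nat -> (forall t, u (S t) <= rho * u t + K) ->
  forall t, u t <= u 0%nat + K / (1 - rho).
Proof.
move=> rho01 K0 u0 rec; set Kq := K / (1 - rho).
have eK : K = (1 - rho) * Kq by rewrite /Kq; field; lra.
have Kq0 : 0 <= Kq by rewrite /Kq; apply: Rle_mult_inv_pos; lra.
elim=> [|t IH]; first lra.
apply: (Rle_trans _ _ _ (rec t)); rewrite eK.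
by have := Rmult_le_compat_l rho _ _ (proj1 rho01) IH; nra.
Qed.

Section VectorSequences.
Context {n : nat}.
Implicit Types u v : nat -> vec n.

Lemma vcauchy_cv u (a : nat -> R) :
  Un_cv a 0 -> (forall k j, vnorm2 (vsub (u k) (u j)) <= a k + a j) -> exists l, vconv u l.
Proof.
move=> a0 cauchy.
have coord i : Cauchy_crit (fun k => u k i).
  move=> e e0; case: (a0 (e * e / 2)) => [|N hN]; first nra.
  exists N => k j kN jN; rewrite /R_dist.
  have := hN k kN; have := hN j jN; rewrite /R_dist !Rminus_0_r.
  have : (u k i - u j i) * (u k i - u j i) <= vnorm2 (vsub (u k) (u j)).
    exact: (sum_term_le (fun i0 => vsub (u k) (u j) i0 * vsub (u k) (u j) i0) i
              (fun i0 => Rle_0_sqr _)).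
  by have := cauchy k j; split_Rabs; nra.
exists (fun i => proj1_sig (R_complete _ (coord i))).
apply: sqrt_cv0 => [k|]; first exact: vnorm2_ge0.
apply: (sum_cv0 (fun i k => _ * _)) => i.
have d := CV_minus _ _ _ _ (proj2_sig (R_complete _ (coord i)))
  (cv_const (proj1_sig (R_complete _ (coord i)))).
by have := CV_mult _ _ _ _ d d; rewrite Rminus_diag_eq // Rmult_0_l.
Qed.

Lemma vlim_eq u v l1 l2 :
  vconv u l1 -> vconv v l2 -> Un_cv (fun k => vdist (u k) (v k)) 0 -> l1 = l2.
Proof.
move=> ul vl uv; apply: vdist_le0.
apply: (le_lim _ _ (fun k => vdist (u k) l1 + vdist (u k) (v k) + vdist (v k) l2)).
  move=> k; have := vdist_triangle l1 (u k) l2; have := vdist_triangle (u k) (v k) l2.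
  by rewrite (vdist_sym l1 (u k)); lra.
by have := CV_plus _ _ _ _ (CV_plus _ _ _ _ ul uv) vl; rewrite !Rplus_0_r.
Qed.

Lemma vconv_subseq u l (T : nat -> nat) :
  vconv u l -> (forall k, (k <= T k)%coq_nat) -> vconv (fun k => u (T k)) l.
Proof. exact: cv_subseq. Qed.

Lemma compact_closed (D : vec n -> Prop) : is_compact D -> is_closed D.
Proof.
move=> Dco u l Du ul; case: (Dco u Du) => phi [l' [incr [Dl' ul']]].
rewrite (vlim_eq _ _ _ _ (vconv_subseq _ _ _ ul (incr_ge_id _ incr)) ul') //.
have := cv_const 0; apply: Un_cv_ext => k.
by rewrite vdist_self.
Qed.

Lemma compact_bounded (D : vec n -> Prop) : is_compact D -> exists M, forall d, D d -> vnorm d <= M.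
Proof.
move=> Dco; apply: NNPP => unbounded.
have big k : exists d, D d /\ INR k < vnorm d.
  apply: NNPP => none; apply: unbounded; exists (INR k) => d Dd.
  by apply: Rnot_lt_le => kd; apply: none; exists d.
case: (choice _ big) => u Du.
case: (Dco u (fun k => (Du k).1)) => phi [l [incr [_ ul]]].
case: (ul 1) => [|N hN]; first lra.
case: (INR_archimed 1 (vnorm l + 1)) => [|K hK]; first lra.
have := hN (Nat.max N K) ltac:(lia); rewrite /R_dist Rminus_0_r Rabs_right; last first.
  by apply: Rle_ge; exact: vnorm_ge0.
have := vnorm_le_sub (u (phi (Nat.max N K))) l; have := (Du (phi (Nat.max N K))).2.
have : INR K <= INR (phi (Nat.max N K)).
  by apply: le_INR; have := incr_ge_id _ incr (Nat.max N K); lia.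
rewrite /vdist; lra.
Qed.

End VectorSequences.

Lemma inf_approx (E : R -> Prop) :
  (exists r, E r) -> (forall r, E r -> 0 <= r) ->
  exists m, 0 <= m /\ (forall r, E r -> m <= r) /\ forall e, 0 < e -> exists r, E r /\ r < m + e.
Proof.
move=> [r0 Er0] E0.
have ub : bound (fun s => E (- s)) by exists 0 => s /E0; lra.
have ne : exists s, E (- s) by exists (- r0); rewrite Ropp_involutive.
case: (completeness _ ub ne) => M [Mub Mlub].
exists (- M); split; [|split].
- suff : M <= 0 by lra.
  by apply: Mlub => s /E0; lra.
- by move=> r Er; have := Mub (- r); rewrite /= Ropp_involutive => /(_ Er); lra.
- move=> e e0; apply: NNPP => none.
  suff : M <= M - e by lra.
  apply: Mlub => s Es; apply: Rnot_lt_le => sM; apply: none.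
  by exists (- s); split => //; lra.
Qed.

Section Projection.
Context {n : nat}.
Variable C : vec n -> Prop.
Hypotheses (HCne : nonempty C) (HCcl : is_closed C) (HCcv : is_convex C).

(* A minimizing sequence is Cauchy by the parallelogram identity
   applied to its midpoints, which lie in C by convexity. *)
Lemma proj_exists x : exists p, nearest C x p.
Proof.
case: (inf_approx (fun r => exists c, C c /\ r = vnorm2 (vsub x c))) => [| |m [m0 [m_lb m_approx]]].
- by case: HCne => c Cc; exists (vnorm2 (vsub x c)), c.
- by move=> r [c [_ ->]]; exact: vnorm2_ge0.
have m_le c : C c -> m <= vnorm2 (vsub x c) by move=> Cc; apply: m_lb; exists c.
have approx k : exists c, C c /\ vnorm2 (vsub x c) < m + inv_succ k * inv_succ k.
  have e0 : 0 < inv_succ k * inv_succ k by have := inv_succ_gt0 k; nra.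
  by case: (m_approx _ e0) => r [[c [Cc ->]] lt]; exists c.
case: (choice _ approx) => cs csm.
have [l csl] : exists l, vconv cs l.
  apply: (vcauchy_cv _ (fun k => 2 * (inv_succ k * inv_succ k))).
    have := CV_mult _ _ _ _ (cv_const 2) (CV_mult _ _ _ _ inv_succ_cv0 inv_succ_cv0).
    by rewrite !Rmult_0_r.
  move=> k j; set mid := vadd (vscale (/2) (cs k)) (vscale (1 - /2) (cs j)).
  have Cmid : C mid by apply: HCcv; [exact: (csm k).1 | exact: (csm j).1 | lra].
  have -> : vnorm2 (vsub (cs k) (cs j)) =
    2 * vnorm2 (vsub x (cs k)) + 2 * vnorm2 (vsub x (cs j)) - 4 * vnorm2 (vsub x mid).
    by rewrite /mid; vec_ring.
  by have := m_le _ Cmid; have := (csm k).2; have := (csm j).2; lra.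
exists l; split; first exact: HCcl cs l (fun k => (csm k).1) csl.
move=> c Cc; apply: (Rle_trans _ (sqrt m)); last by apply: sqrt_le_1_alt; exact: m_le.
apply: (le_lim _ _ (fun k => inv_succ k + vdist (cs k) l)); last first.
  by have := CV_plus _ _ _ _ inv_succ_cv0 csl; rewrite Rplus_0_r.
move=> k; have := vdist_triangle x (cs k) l.
suff : vdist x (cs k) <= sqrt m + inv_succ k by lra.
have e0 := inv_succ_gt0 k; have sm0 := sqrt_pos m; have sm := sqrt_sqrt m m0.
rewrite -(sqrt_square (sqrt m + inv_succ k)); last lra.
by apply: sqrt_le_1_alt; rewrite -/(vnorm2 _); have := (csm k).2; nra.
Qed.

Lemma proj_nearest x : nearest C x (proj C x).
Proof. exact: epsilon_spec (proj_exists x). Qed.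

Lemma proj_in x : C (proj C x).
Proof. exact: (proj_nearest x).1. Qed.

Lemma proj_variational x c : C c -> vdot (vsub x (proj C x)) (vsub c (proj C x)) <= 0.
Proof.
move=> Cc; set p := proj C x; set v := vdot (vsub x p) (vsub c p); set K := vnorm2 (vsub c p).
have K0 : 0 <= K := vnorm2_ge0 _.
have key s : 0 < s <= 1 -> 2 * s * v <= s * s * K.
  move=> s01.
  have Cq : C (vadd (vscale s c) (vscale (1 - s) p)).
    by apply: HCcv; [exact: Cc | exact: proj_in | lra].
  have := nearest_vnorm2 _ _ _ _ (proj_nearest x) Cq.
  have -> : vnorm2 (vsub x (vadd (vscale s c) (vscale (1 - s) p))) =
    vnorm2 (vsub x p) - 2 * s * v + s * s * K by rewrite /v /K; vec_ring.
  rewrite -/p; lra.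
(* Minimizing the quadratic in [s] at [s = v / (v + K)] shows [v > 0] is impossible. *)
apply: Rnot_lt_le => v0; set s := v / (v + K).
have sK : s * (v + K) = v by rewrite /s; field; lra.
have s01 : 0 < s <= 1.
  split; first by apply: Rdiv_lt_0_compat; lra.
  by apply: (Rmult_le_reg_r (v + K)); lra.
have ks := key s s01.
have : 2 * v <= s * K by apply: (Rmult_le_reg_l s); nra.
nra.
Qed.

Lemma proj_unique x q : C q -> (forall c, C c -> vdot (vsub x q) (vsub c q) <= 0) -> proj C x = q.
Proof.
move=> Cq q_var; apply: vdist_le0; rewrite /vdist /vnorm.
have := q_var _ (proj_in x); have := proj_variational x q Cq.
have -> : vdot (vsub (proj C x) q) (vsub (proj C x) q) =
  vdot (vsub x q) (vsub (proj C x) q) + vdot (vsub x (proj C x)) (vsub q (proj C x)) by vec_ring.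
move=> *; rewrite sqrt_neg_0; lra.
Qed.

Lemma proj_firmly_nonexp a b :
  vnorm2 (vsub (proj C a) (proj C b)) <= vdot (vsub a b) (vsub (proj C a) (proj C b)).
Proof.
have := proj_variational a (proj C b) (proj_in b).
have := proj_variational b (proj C a) (proj_in a).
have -> : vdot (vsub a b) (vsub (proj C a) (proj C b)) =
  vnorm2 (vsub (proj C a) (proj C b)) - vdot (vsub a (proj C a)) (vsub (proj C b) (proj C a))
  - vdot (vsub b (proj C b)) (vsub (proj C a) (proj C b)) by vec_ring.
lra.
Qed.

Lemma proj_nonexp a b : vnorm (vsub (proj C a) (proj C b)) <= vnorm (vsub a b).
Proof.
have := proj_firmly_nonexp a b; have := vdot_cauchy_schwarz (vsub a b) (vsub (proj C a) (proj C b)).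
rewrite -vnorm_sqr.
have := vnorm_ge0 (vsub (proj C a) (proj C b)); have := vnorm_ge0 (vsub a b).
have [->|] := Req_dec (vnorm (vsub (proj C a) (proj C b))) 0; nra.
Qed.

Lemma resid_nonexp a b :
  vnorm2 (vsub (vsub a (proj C a)) (vsub b (proj C b))) <= vnorm2 (vsub a b).
Proof.
have := proj_firmly_nonexp a b; have := vnorm2_ge0 (vsub (proj C a) (proj C b)).
have -> : vnorm2 (vsub (vsub a (proj C a)) (vsub b (proj C b))) =
  vnorm2 (vsub a b) - 2 * vdot (vsub a b) (vsub (proj C a) (proj C b))
  + vnorm2 (vsub (proj C a) (proj C b)) by vec_ring.
lra.
Qed.

Lemma gap_sub_resid_cv (Y Z : nat -> vec n) l k :
  0 <= k -> vconv Y l -> Un_cv (fun t => vdist (Y t) (Z t)) 0 ->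
  vconv (fun t => vsub (vscale k (vsub (Y t) (Z t))) (vsub (Y t) (proj C (Y t))))
        (vscale (-1) (vsub l (proj C l))).
Proof.
move=> k0 Yl YZ.
apply: (squeeze0 _ (fun t => k * vdist (Y t) (Z t) + vdist (Y t) l)).
  2: by have := CV_plus _ _ _ _ (CV_mult _ _ _ _ (cv_const k) YZ) Yl; rewrite Rmult_0_r Rplus_0_r.
move=> t; split; first exact: vnorm_ge0.
have -> : vdist (vsub (vscale k (vsub (Y t) (Z t))) (vsub (Y t) (proj C (Y t))))
                 (vscale (-1) (vsub l (proj C l))) =
  vnorm (vsub (vscale k (vsub (Y t) (Z t))) (vsub (vsub (Y t) (proj C (Y t))) (vsub l (proj C l)))).
  by rewrite /vdist; congr vnorm; vec_ext; ring.
apply: (Rle_trans _ _ _ (vnorm_sub_le _ _)); rewrite vnorm_scale Rabs_right; last lra.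
by apply: Rplus_le_compat_l; apply: sqrt_le_1_alt; exact: resid_nonexp.
Qed.

Lemma half_dist2_convex a b :
  / 2 * vnorm2 (vsub a (proj C a)) - / 2 * vnorm2 (vsub b (proj C b)) <=
  vdot (vsub a (proj C a)) (vsub a b).
Proof.
have := proj_variational a (proj C b) (proj_in b).
have := vnorm2_ge0 (vsub (vsub b (proj C b)) (vsub a (proj C a))).
have -> : vdot (vsub a (proj C a)) (vsub a b) =
  / 2 * vnorm2 (vsub a (proj C a)) - / 2 * vnorm2 (vsub b (proj C b))
  + / 2 * vnorm2 (vsub (vsub b (proj C b)) (vsub a (proj C a)))
  - vdot (vsub a (proj C a)) (vsub (proj C b) (proj C a)) by vec_ring.
lra.
Qed.

Lemma dist_set_proj x : dist_set C x = vdist x (proj C x).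
Proof.
have inf : is_inf_dist C x (vdist x (proj C x)).
  by split; [exact: (proj_nearest x).2 | move=> s; apply; exact: proj_in].
case: (epsilon_spec (inhabits R0) (is_inf_dist C x) (ex_intro _ _ inf)) => lb glb.
have := lb _ (proj_in x); have := glb _ (proj_nearest x).2.
rewrite -/(dist_set C x); lra.
Qed.

Lemma half_dist2_gradient x :
  has_gradient (fun u => / 2 * (dist_set C u) ^ 2) x (vsub x (proj C x)).
Proof.
move=> eps eps0; exists eps; split => // u [ux0 ux].
rewrite !dist_set_proj /vdist /vnorm !pow2_sqrt; try exact: vnorm2_ge0.
rewrite -!/(vnorm2 _).
rewrite /vdist in ux0 ux; rewrite -/(vnorm (vsub u x)).
have := half_dist2_convex x u; have := half_dist2_convex u x.
have := proj_firmly_nonexp u x; have := vnorm2_ge0 (vsub (proj C u) (proj C x)).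
have -> : vdot (vsub x (proj C x)) (vsub x u) = - vdot (vsub x (proj C x)) (vsub u x) by vec_ring.
have -> : vdot (vsub u (proj C u)) (vsub u x) =
  vdot (vsub x (proj C x)) (vsub u x) + vnorm2 (vsub u x)
  - vdot (vsub u x) (vsub (proj C u) (proj C x)) by vec_ring.
have := vnorm_sqr (vsub u x); have := vnorm_ge0 (vsub u x).
have : vnorm2 (vsub u x) <= eps * vnorm (vsub u x) by rewrite -vnorm_sqr; nra.
by move=> *; rewrite Rabs_right; lra.
Qed.

End Projection.

Lemma nearest_regular_normal {n} (D : vec n -> Prop) (w p : vec n) k :
  0 < k -> nearest D w p -> regular_subgrad_ind D p (vscale k (vsub w p)).
Proof.
move=> k0 pD eps eps0; exists (2 * eps / k); split.
  by apply: Rdiv_lt_0_compat; lra.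
move=> c Dc [cp0 cp]; rewrite /vdist in cp0 cp *.
have := nearest_vnorm2 _ _ _ _ pD Dc.
have -> : vnorm2 (vsub w c) =
  vnorm2 (vsub w p) - 2 * vdot (vsub w p) (vsub c p) + vnorm2 (vsub c p) by vec_ring.
have -> : vdot (vscale k (vsub w p)) (vsub c p) = k * vdot (vsub w p) (vsub c p) by vec_ring.
have := vnorm_sqr (vsub c p).
have : k * vnorm (vsub c p) < 2 * eps.
  have -> : 2 * eps = k * (2 * eps / k) by field; lra.
  exact: Rmult_lt_compat_l.
move=> kc e2 near; apply: Rle_ge.
have -> : - (k * vdot (vsub w p) (vsub c p)) / vnorm (vsub c p) =
  - ((k * vdot (vsub w p) (vsub c p)) / vnorm (vsub c p)) by rewrite /Rdiv; ring.
apply: Ropp_le_contravar; apply: (Rmult_le_reg_r (vnorm (vsub c p))) => //.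
rewrite /Rdiv Rmult_assoc Rinv_l; nra.
Qed.

Definition merit {n} (C : vec n -> Prop) (g : R) (y z x : vec n) : R :=
  / 2 * vnorm2 (vsub y (proj C y)) + 5 / 2 * vnorm2 y - 5 / 2 * vnorm2 z
  + vdot (vsub y x) (vsub y z) * / g + / (2 * g) * vnorm2 (vsub y z).

Section Merit.
Context {n : nat}.
Variable C : vec n -> Prop.
Hypotheses (HCne : nonempty C) (HCcl : is_closed C) (HCcv : is_convex C).

Lemma merit_descent g (Y Y' Z Z' X X' : vec n) :
  0 < g -> 5 * g < 1 ->
  (forall i, X i = Y i + g * (6 * Y i - proj C Y i)) ->
  (forall i, X' i = Y' i + g * (6 * Y' i - proj C Y' i)) ->
  (forall i, X' i = X i + 2 * (Z i - Y i)) ->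
  vnorm2 (vsub (fun i => / (1 - 5 * g) * (2 * Y' i - X' i)) Z') <=
  vnorm2 (vsub (fun i => / (1 - 5 * g) * (2 * Y' i - X' i)) Z) ->
  merit C g Y' Z' X' <= merit C g Y Z X - (5 / 2 - 26 * g) * vnorm2 (vsub Y' Y).
Proof.
move=> g0 g5 XY XY' XX' Z'_better.
set w := (fun i => / (1 - 5 * g) * (2 * Y' i - X' i)) in Z'_better *.
set h := vsub (vsub Y' (proj C Y')) (vsub Y (proj C Y)).
set d := vsub Y' Y.
(* The merit gap splits into a convexity gap of F, a term controlled by the Lipschitz constant of
   [grad F + 5 Id], and the optimality gap of the z-step. *)
have -> : merit C g Y' Z' X' =
  merit C g Y Z X
  + (/ 2 * vnorm2 (vsub Y' (proj C Y')) - / 2 * vnorm2 (vsub Y (proj C Y))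
     - vdot (vsub Y' (proj C Y')) d)
  + g / 2 * vnorm2 (vadd (vscale 5 d) h) - 5 / 2 * vnorm2 d
  + (1 - 5 * g) / (2 * g) * (vnorm2 (vsub w Z') - vnorm2 (vsub w Z)).
  rewrite /merit /w /h /d; unfold vnorm2, vdot, vadd, vsub, vscale; rewrite /Rdiv; sum_merge.
  apply: eq_bigr => i _.
  have -> : Z i = Y i + (X' i - X i) / 2 by rewrite XX'; field.
  by rewrite XY XY'; field; lra.
have : / 2 * vnorm2 (vsub Y' (proj C Y')) - / 2 * vnorm2 (vsub Y (proj C Y)) <=
  vdot (vsub Y' (proj C Y')) d := half_dist2_convex C HCne HCcl HCcv Y' Y.
have h_le : vnorm2 h <= vnorm2 d := resid_nonexp C HCne HCcl HCcv Y' Y.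
have : g / 2 * vnorm2 (vadd (vscale 5 d) h) <= g / 2 * (52 * vnorm2 d).
  apply: Rmult_le_compat_l; first lra.
  by have := vnorm2_add_le (vscale 5 d) h; rewrite vnorm2_scale; lra.
have : (1 - 5 * g) / (2 * g) * (vnorm2 (vsub w Z') - vnorm2 (vsub w Z)) <= 0.
  have : 0 < (1 - 5 * g) / (2 * g) by apply: Rdiv_lt_0_compat; lra.
  nra.
lra.
Qed.

Lemma merit_ge g (Y Z X : vec n) MY MZ MX :
  0 < g -> vnorm Y <= MY -> vnorm Z <= MZ -> vnorm X <= MX ->
  - (5 / 2 * (MZ * MZ) + / g * (((MY + MX) * (MY + MX) + (MY + MZ) * (MY + MZ)) / 2))
  <= merit C g Y Z X.
Proof.
move=> g0 YM ZM XM.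
have sub_bound (u v : vec n) Mu Mv :
    vnorm u <= Mu -> vnorm v <= Mv -> vnorm2 (vsub u v) <= (Mu + Mv) * (Mu + Mv).
  move=> uM vM; rewrite -vnorm_sqr; have := vnorm_sub_le u v.
  have := vnorm_ge0 (vsub u v); have := vnorm_ge0 u; have := vnorm_ge0 v; nra.
have := vnorm2_ge0 (vsub Y (proj C Y)); have := vnorm2_ge0 Y.
have Zsq : vnorm2 Z <= MZ * MZ by rewrite -vnorm_sqr; have := vnorm_ge0 Z; nra.
have cross : - (((MY + MX) * (MY + MX) + (MY + MZ) * (MY + MZ)) / 2) <= vdot (vsub Y X) (vsub Y Z).
  have := vdot_ge (vsub Y X) (vsub Y Z).
  by have := sub_bound _ _ _ _ YM XM; have := sub_bound _ _ _ _ YM ZM; lra.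
have := Rmult_le_compat_r (/ g) _ _ (Rlt_le _ _ (Rinv_0_lt_compat _ g0)) cross.
have := Rmult_le_pos _ _ (Rlt_le _ _ (Rinv_0_lt_compat (2 * g) ltac:(lra))) (vnorm2_ge0 (vsub Y Z)).
rewrite /merit; lra.
Qed.

End Merit.

Lemma vbounded_succ {n} (u : nat -> vec n) : vbounded (fun t => u (S t)) -> vbounded u.
Proof.
case=> M uM; exists (Rmax M (vnorm (u 0%nat))) => -[|t]; first exact: Rmax_r.
exact: Rle_trans (uM t) (Rmax_l _ _).
Qed.

Lemma subseq_succ_pred (phi : nat -> nat) : (forall k, (phi k < phi (S k))%nat) ->
  exists psi : nat -> nat, (forall k, (k <= psi k)%coq_nat) /\ forall k, phi (S k) = S (psi k).
Proof.
move=> incr; exists (fun k => Nat.pred (phi (S k))).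
by split => k; have := incr_ge_id _ incr (S k); lia.
Qed.

Section Iteration.
Context {n : nat}.
Variables (C D : vec n -> Prop) (gamma : R) (x y z : nat -> vec n).
Hypotheses (HCne : nonempty C) (HCcl : is_closed C) (HCcv : is_convex C) (HDco : is_compact D).
Hypothesis Hg : 0 < gamma < /12.
Hypothesis Hy : forall t, y (S t) =
  vscale (/ (6 * gamma + 1))
    (vadd (vscale gamma (proj C (vscale (/ (1 + 5 * gamma)) (x t)))) (x t)).
Hypothesis Hz : forall t,
  nearest D (vscale (/ (1 - 5 * gamma)) (vsub (vscale 2 (y (S t))) (x t))) (z (S t)).
Hypothesis Hx : forall t, x (S t) = vadd (x t) (vscale 2 (vsub (z (S t)) (y (S t)))).

Lemma gamma_range : 0 < gamma /\ 12 * gamma < 1.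
Proof.
split; first lra.
by have := Rmult_lt_compat_l 12 _ _ ltac:(lra) (proj2 Hg); rewrite Rinv_r; lra.
Qed.

(* The y-step solves [x^t = y + gamma (grad F y + 5 y)]; by the variational characterization
   this pins down the projection of [y^{t+1}]. *)
Lemma proj_y_succ t : proj C (y (S t)) = proj C (vscale (/ (1 + 5 * gamma)) (x t)).
Proof.
have [g0 g12] := gamma_range; set v := vscale (/ (1 + 5 * gamma)) (x t); set q := proj C v.
apply: (proj_unique C HCne HCcl HCcv) => [|c Cc]; first exact: proj_in.
have := proj_variational C HCne HCcl HCcv v c Cc; rewrite -/q.
have -> : vdot (vsub (y (S t)) q) (vsub c q) =
  (1 + 5 * gamma) / (6 * gamma + 1) * vdot (vsub v q) (vsub c q).
  rewrite Hy -/v -/q; unfold vdot, vadd, vsub, vscale; rewrite /Rdiv; sum_merge.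
  by apply: eq_bigr => i _; rewrite /v /vscale; field; lra.
have : 0 < (1 + 5 * gamma) / (6 * gamma + 1) by apply: Rdiv_lt_0_compat; lra.
nra.
Qed.

Lemma x_from_y t i : x t i = y (S t) i + gamma * (6 * y (S t) i - proj C (y (S t)) i).
Proof. have [g0 g12] := gamma_range; by rewrite proj_y_succ Hy /vadd /vscale; field; lra. Qed.

Lemma proj_x_bound t :
  vnorm (proj C (vscale (/ (1 + 5 * gamma)) (x t))) <= vnorm (proj C (fun _ => 0)) + vnorm (x t).
Proof.
have [g0 g12] := gamma_range; set v := vscale (/ (1 + 5 * gamma)) (x t).
have := vnorm_le_sub (proj C v) (proj C (fun _ => 0)).
have := proj_nonexp C HCne HCcl HCcv v (fun _ => 0).
have -> : vsub v (fun _ => 0) = v by vec_ext; ring.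
have : vnorm v <= vnorm (x t).
  rewrite /v vnorm_scale Rabs_right; last first.
    by apply: Rle_ge; apply: Rlt_le; apply: Rinv_0_lt_compat; lra.
  rewrite -{2}(Rmult_1_l (vnorm (x t))); apply: Rmult_le_compat_r; first exact: vnorm_ge0.
  by rewrite -Rinv_1; apply: Rinv_le_contravar; lra.
lra.
Qed.

Lemma x_bounded : vbounded x.
Proof.
have [g0 g12] := gamma_range; case: (compact_bounded D HDco) => MD DM.
set P0 := vnorm (proj C (fun _ => 0)).
set A := (1 - 6 * gamma) / (1 + 6 * gamma); set B := 2 * gamma / (1 + 6 * gamma).
have A0 : 0 <= A by apply: Rle_mult_inv_pos; lra.
have B0 : 0 <= B by apply: Rle_mult_inv_pos; lra.
have AB1 : A + B < 1.
  rewrite /A /B -Rdiv_plus_distr; apply: (Rmult_lt_reg_r (1 + 6 * gamma)); first lra.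
  by rewrite /Rdiv Rmult_assoc Rinv_l; lra.
have MD0 : 0 <= MD by have := DM _ (Hz 0%nat).1; have := vnorm_ge0 (z 1%nat); lra.
have rec t : vnorm (x (S t)) <= (A + B) * vnorm (x t) + (2 * MD + B * P0).
  have -> : x (S t) = vadd (vadd (vscale (- A) (x t)) (vscale 2 (z (S t))))
                           (vscale (- B) (proj C (vscale (/ (1 + 5 * gamma)) (x t)))).
    by vec_ext; rewrite Hx Hy /A /B /vadd /vscale /vsub; field; lra.
  have := vnorm_triangle (vadd (vscale (- A) (x t)) (vscale 2 (z (S t))))
            (vscale (- B) (proj C (vscale (/ (1 + 5 * gamma)) (x t)))).
  have := vnorm_triangle (vscale (- A) (x t)) (vscale 2 (z (S t))).
  rewrite !vnorm_scale !Rabs_Ropp (Rabs_right A) ?(Rabs_right B) ?(Rabs_right 2); try lra.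
  have := DM _ (Hz t).1; have := Rmult_le_compat_l B _ _ B0 (proj_x_bound t); rewrite -/P0; lra.
exists (vnorm (x 0%nat) + (2 * MD + B * P0) / (1 - (A + B))).
apply: affine_rec_bound => //; first by split; lra.
- by have := Rmult_le_pos _ _ B0 (vnorm_ge0 (proj C (fun _ => 0))); rewrite -/P0; lra.
- exact: vnorm_ge0.
Qed.

Lemma z_bounded : vbounded z.
Proof.
case: (compact_bounded D HDco) => MD DM; apply: vbounded_succ.
by exists MD => t; apply: DM; exact: (Hz t).1.
Qed.

Lemma y_bounded : vbounded y.
Proof.
have [g0 g12] := gamma_range; case: x_bounded => MX XM; apply: vbounded_succ.
set P0 := vnorm (proj C (fun _ => 0)).
exists (gamma * (P0 + MX) + MX) => t; rewrite Hy vnorm_scale Rabs_right; last first.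
  by apply: Rle_ge; apply: Rlt_le; apply: Rinv_0_lt_compat; lra.
set u := vadd _ (x t).
have : vnorm u <= gamma * (P0 + MX) + MX.
  have := vnorm_triangle (vscale gamma (proj C (vscale (/ (1 + 5 * gamma)) (x t)))) (x t).
  rewrite vnorm_scale Rabs_right -/u; last lra.
  have : vnorm (proj C (vscale (/ (1 + 5 * gamma)) (x t))) <= P0 + MX.
    by have := proj_x_bound t; have := XM t; rewrite -/P0; lra.
  move/(Rmult_le_compat_l gamma _ _ (Rlt_le _ _ g0)).
  by have := XM t; lra.
have : / (6 * gamma + 1) <= 1 by rewrite -Rinv_1; apply: Rinv_le_contravar; lra.
have := vnorm_ge0 u; have : 0 < / (6 * gamma + 1) by apply: Rinv_0_lt_compat; lra.
nra.
Qed.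

Lemma merit_step t :
  merit C gamma (y (S (S t))) (z (S (S t))) (x (S t)) <=
  merit C gamma (y (S t)) (z (S t)) (x t)
  - (5 / 2 - 26 * gamma) * vnorm2 (vsub (y (S (S t))) (y (S t))).
Proof.
have [g0 g12] := gamma_range.
apply: (merit_descent C HCne HCcl HCcv) => //; try lra.
- exact: x_from_y.
- exact: x_from_y.
- by move=> i; rewrite Hx.
- exact: nearest_vnorm2 _ _ _ _ (Hz (S t)) (Hz t).1.
Qed.

Lemma y_step_cv0 : Un_cv (fun t => vnorm2 (vsub (y (S (S t))) (y (S t)))) 0.
Proof.
have [g0 g12] := gamma_range.
case: x_bounded => MX XM; case: y_bounded => MY YM; case: z_bounded => MZ ZM.
apply: (descent_cv0 (fun t => merit C gamma (y (S t)) (z (S t)) (x t)) _ (5 / 2 - 26 * gamma) _).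
- lra.
- by move=> t; exact: vnorm2_ge0.
- by move=> t; apply: merit_ge.
- exact: merit_step.
Qed.

(* [z^{t+1} - y^{t+1} = (x^{t+1} - x^t) / 2], and by [x_from_y] this difference is a combination of
   [y^{t+2} - y^{t+1}] and of the increment of the 1-Lipschitz map [u - P_C u]. *)
Lemma z_sub_y_bound t :
  vnorm2 (vsub (z (S t)) (y (S t))) <=
  ((1 + 5 * gamma) * (1 + 5 * gamma) + gamma * gamma) / 2 * vnorm2 (vsub (y (S (S t))) (y (S t))).
Proof.
set d := vsub (y (S (S t))) (y (S t)).
set h := vsub (vsub (y (S (S t))) (proj C (y (S (S t))))) (vsub (y (S t)) (proj C (y (S t)))).
have -> : vsub (z (S t)) (y (S t)) = vadd (vscale ((1 + 5 * gamma) / 2) d) (vscale (gamma / 2) h).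
  vec_ext; have := f_equal (fun f => f i) (Hx t).
  rewrite /d /h /vadd /vscale /vsub (x_from_y t i) (x_from_y (S t) i) => e.
  have -> : z (S t) i = y (S t) i
    + (y (S (S t)) i + gamma * (6 * y (S (S t)) i - proj C (y (S (S t))) i)
       - (y (S t) i + gamma * (6 * y (S t) i - proj C (y (S t)) i))) / 2 by lra.
  field.
have := vnorm2_add_le (vscale ((1 + 5 * gamma) / 2) d) (vscale (gamma / 2) h).
have := resid_nonexp C HCne HCcl HCcv (y (S (S t))) (y (S t)); rewrite -/d -/h !vnorm2_scale.
have := Rle_0_sqr gamma; rewrite /Rsqr; nra.
Qed.

Lemma yz_dist_cv0 : Un_cv (fun t => vdist (y t) (z t)) 0.
Proof.
apply: (CV_shift _ 1); apply: (Un_cv_ext (fun t => sqrt (vnorm2 (vsub (z (S t)) (y (S t)))))).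
  by move=> t; rewrite Nat.add_1_r /vdist vnorm_sub_sym.
apply: sqrt_cv0 => [t|]; first exact: vnorm2_ge0.
set K := ((1 + 5 * gamma) * (1 + 5 * gamma) + gamma * gamma) / 2.
apply: (squeeze0 _ (fun t => K * vnorm2 (vsub (y (S (S t))) (y (S t))))).
  by move=> t; split; [exact: vnorm2_ge0 | exact: z_sub_y_bound].
by have := CV_mult _ _ _ _ (cv_const K) y_step_cv0; rewrite Rmult_0_r.
Qed.

(* The normal to D at [z^{t+1}] produced by the z-step, rewritten in terms of [y^{t+1}]. *)
Lemma z_step_normal t :
  vscale ((1 - 5 * gamma) / gamma)
    (vsub (vscale (/ (1 - 5 * gamma)) (vsub (vscale 2 (y (S t))) (x t))) (z (S t)))
  = vsub (vscale ((1 - 5 * gamma) / gamma) (vsub (y (S t)) (z (S t))))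
         (vsub (y (S t)) (proj C (y (S t)))).
Proof. have [g0 g12] := gamma_range; by vec_ext; rewrite x_from_y; field; lra. Qed.

Lemma cluster_stationary (psi : nat -> nat) yb zb :
  (forall k, (k <= psi k)%coq_nat) ->
  vconv (fun k => y (S (psi k))) yb -> vconv (fun k => z (S (psi k))) zb ->
  yb = zb /\ exists g : vec n,
    has_gradient (fun u => / 2 * (dist_set C u) ^ 2) zb g /\ lim_subdiff_ind D zb (vscale (-1) g).
Proof.
move=> psi_ge yc zc; have [g0 g12] := gamma_range.
have yz : Un_cv (fun k => vdist (y (S (psi k))) (z (S (psi k)))) 0.
  apply: (cv_subseq (fun t => vdist (y t) (z t)) _ (fun k => S (psi k))) yz_dist_cv0 _.
  by move=> k; have := psi_ge k; lia.
have ybzb := vlim_eq _ _ _ _ yc zc yz; subst zb.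
split => //; exists (vsub yb (proj C yb)).
split; first exact: half_dist2_gradient.
split; first exact: compact_closed D HDco _ _ (fun k => (Hz (psi k)).1) zc.
set k5 := (1 - 5 * gamma) / gamma.
exists (fun k => z (S (psi k))),
  (fun k => vsub (vscale k5 (vsub (y (S (psi k))) (z (S (psi k)))))
                 (vsub (y (S (psi k))) (proj C (y (S (psi k)))))).
split; first by move=> k; exact: (Hz (psi k)).1.
split; first exact: zc.
split; last first.
  move=> k; rewrite -z_step_normal; apply: nearest_regular_normal (Hz (psi k)).
  by apply: Rdiv_lt_0_compat; lra.
apply: (gap_sub_resid_cv C HCne HCcl HCcv) => //.
by apply: Rlt_le; apply: Rdiv_lt_0_compat; lra.
Qed.

End Iteration.

Theorem mainTheorem11 (n : nat) (C D : vec n -> Prop)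
  (HCne : nonempty C) (HCcl : is_closed C) (HCcv : is_convex C)
  (HDne : nonempty D) (HDco : is_compact D)
  (gamma : R) (Hg : 0 < gamma < /12)
  (x0 : vec n) (x y z : nat -> vec n)
  (Hx0 : x 0%nat = x0)
  (Hy : forall t, y (S t) =
     vscale (/ (6 * gamma + 1))
       (vadd (vscale gamma (proj C (vscale (/ (1 + 5 * gamma)) (x t)))) (x t)))
  (Hz : forall t, nearest D
     (vscale (/ (1 - 5 * gamma)) (vsub (vscale 2 (y (S t))) (x t))) (z (S t)))
  (Hx : forall t, x (S t) = vadd (x t) (vscale 2 (vsub (z (S t)) (y (S t))))) :
  (vbounded y /\ vbounded z /\ vbounded x) /\
  forall (yb zb xb : vec n) (phi : nat -> nat),
    (forall k, (phi k < phi (S k))%nat) ->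
    vconv (fun k => y (phi k)) yb ->
    vconv (fun k => z (phi k)) zb ->
    vconv (fun k => x (phi k)) xb ->
    yb = zb /\
    exists g : vec n,
      has_gradient (fun u => / 2 * (dist_set C u) ^ 2) zb g /\
      lim_subdiff_ind D zb (vscale (-1) g).
Proof.
split.
  split; first exact: (y_bounded C D gamma x y z).
  split; first exact: (z_bounded D gamma x y z).
  exact: (x_bounded C D gamma x y z).
move=> yb zb xb phi incr yc zc _.
case: (subseq_succ_pred phi incr) => psi [psi_ge phi_succ].
have shift (u : nat -> vec n) l :
    vconv (fun k => u (phi k)) l -> vconv (fun k => u (S (psi k))) l.
  move=> ul; apply: (Un_cv_ext (fun k => vdist (u (phi (S k))) l)).
    by move=> k; rewrite phi_succ.
  by apply: (vconv_subseq _ _ S ul) => k; lia.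
exact: (cluster_stationary C D gamma x y z HCne HCcl HCcv HDco Hg Hy Hz Hx psi yb zb psi_ge
  (shift _ _ yc) (shift _ _ zc)).
Qed.
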